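(* Under the assumptions of the explicit-formulae proposition (piecewise linear concave non-positive increasing $v$ on grid $x_1<\dots<x_N$, $-\infty$ below $x_1$ and constant above $x_N$; $u$ concave increasing with $u^\dagger$ continuous on $(0,\infty)$ and $\lim_{p\to0}u^\dagger(p)=\infty$; $s\in(0,1)$), $\lim_{\eta\to\infty}\gamma^\eta=\gamma_{\min}$.
   Context: $\gamma_{\min}=\inf\{x:u(x)>-\infty\}$. $\Phi$ is the standard normal distribution function, $M=|\mu-r|\sqrt{\delta t}/\sigma$, $Q(x)=\Phi(M+\Phi^{-1}(x))$, $q^A_{BS}=Q'$. For concave increasing $g$, $g^\dagger(p)=\inf\{x:p\in\partial g(x)\}$, $\partial g$ the superdifferential. $C\in\{0,1\}$. For $\eta>0$: $f^\eta(x)=v^\dagger(\eta s^{C-1}e^{-r\delta t}q^A_{BS}(x))$, $\gamma^\eta=u^\dagger\big(-\frac{\eta}{\delta t}\big(-1+s\int_0^1(1+v(f^\eta(x)))\mathrm dx\big)^{-1}\big)$. *)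

From Stdlib Require Import Reals Lra ClassicalEpsilon.
Open Scope R_scope.

(* Extended reals "R u {-oo}": None stands for -infinity. *)
Definition ER := option R.

Definition ER_le (a b : ER) : Prop :=
  match a, b with
  | None, _ => True
  | Some _, None => False
  | Some x, Some y => x <= y
  end.

(* value of a finite extended real (junk 0 at -oo) *)
Definition valR (a : ER) : R := match a with Some x => x | None => 0 end.

Definition concave_ext (g : R -> ER) : Prop :=
  forall x y a b t, g x = Some a -> g y = Some b -> 0 <= t <= 1 ->
    exists c, g (t * x + (1 - t) * y) = Some c /\ t * a + (1 - t) * b <= c.

Definition nondecreasing_ext (g : R -> ER) : Prop :=
  forall x y, x <= y -> ER_le (g x) (g y).

Definition superdiff (g : R -> ER) (x p : R) : Prop :=
  exists gx, g x = Some gx /\ forall y, ER_le (g y) (Some (gx + p * (y - x))).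

Definition is_lower_bound (S : R -> Prop) (m : R) : Prop := forall x, S x -> m <= x.
Definition is_glb (S : R -> Prop) (m : R) : Prop :=
  is_lower_bound S m /\ forall b, is_lower_bound S b -> b <= m.

(* g^dagger(p) = inf { x : p in superdiff g x } (junk value if no real infimum) *)
Definition dagger_set (g : R -> ER) (p : R) : R -> Prop := fun x => superdiff g x p.
Definition dagger (g : R -> ER) (p : R) : R :=
  epsilon (inhabits 0) (is_glb (dagger_set g p)).

(* effective domain {x : g x > -oo} ; gamma_min is its infimum *)
Definition dom_ext (g : R -> ER) : R -> Prop := fun x => g x <> None.

(* Riemann integral of f between a and b (junk if not integrable) *)
Definition Rint (f : R -> R) (a b : R) : R :=
  epsilon (inhabits 0) (fun I => exists pr : Riemann_integrable f a b, RiemannInt pr = I).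

Definition phi_std (t : R) : R := exp (- (t ^ 2) / 2) / sqrt (2 * PI).
Definition Phi (x : R) : R :=
  epsilon (inhabits 0) (fun l => Un_cv (fun n => Rint phi_std (- INR n) x) l).
Definition Phi_inv (y : R) : R := epsilon (inhabits 0) (fun x => Phi x = y).

Definition Mpar (mu r sigma dt : R) : R := Rabs (mu - r) * sqrt dt / sigma.
Definition Qfun (M x : R) : R := Phi (M + Phi_inv x).
Definition qBS (M x : R) : R :=
  epsilon (inhabits 0) (fun l => derivable_pt_lim (Qfun M) x l).

Definition f_eta (v : R -> ER) (mu r sigma dt s : R) (C : nat) (eta x : R) : R :=
  dagger v (eta * powerRZ s (Z.of_nat C - 1) * exp (- r * dt) * qBS (Mpar mu r sigma dt) x).

Definition gamma_eta (u v : R -> ER) (mu r sigma dt s : R) (C : nat) (eta : R) : R :=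
  dagger u (- (eta / dt) *
    / (-1 + s * Rint (fun x => 1 + valR (v (f_eta v mu r sigma dt s C eta x))) 0 1)).


From Stdlib Require Import Reals Lra Lia Classical ClassicalEpsilon FunctionalExtensionality.
From Stdlib Require Import Ranalysis5.
From Coquelicot Require Import Coquelicot.
Open Scope R_scope.

(* Write gamma^eta = u^dagger(p eta) with p eta = (eta/dt) / (1 - s I eta), where
   I eta = int_0^1 (1 + v(f^eta)) lies in [1 + v(x_1), 1]; hence p eta grows at least
   linearly in eta.  For u nondecreasing, a superdifferential point x at slope p
   satisfies p (x - z) <= u(X) - u(z) for every z in the domain of u (X a point at slope 1),
   so u^dagger(p) -> inf dom u as p -> oo.  The bound on I eta needs Riemann integrability:
   the integrand is monotone because q(x) = exp(-M Phi^-1(x) - M^2/2) is decreasing, and this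
   formula for q rests on the Gaussian integral, obtained by Feynman's trick. *)

Lemma RInt_scal_R (f : R -> R) a b l :
  ex_RInt f a b -> RInt (fun x => l * f x) a b = l * RInt f a b.
Proof. exact (RInt_scal (V:=R_CompleteNormedModule) f a b l). Qed.

Lemma RInt_comp_lin_R (f : R -> R) c d a b : ex_RInt f (c * a + d) (c * b + d) ->
  RInt (fun y => c * f (c * y + d)) a b = RInt f (c * a + d) (c * b + d).
Proof. exact (RInt_comp_lin (V:=R_CompleteNormedModule) f c d a b). Qed.

Lemma RInt_ext_R (f g : R -> R) a b :
  (forall x, Rmin a b < x < Rmax a b -> f x = g x) -> RInt f a b = RInt g a b.
Proof. exact (RInt_ext (V:=R_CompleteNormedModule) f g a b). Qed.

Lemma RInt_const_R a b (c : R) : RInt (fun _ => c) a b = (b - a) * c.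
Proof. exact (RInt_const (V:=R_CompleteNormedModule) a b c). Qed.

Lemma ex_RInt_continuous_R (f : R -> R) a b :
  (forall z, Rmin a b <= z <= Rmax a b -> continuous f z) -> ex_RInt f a b.
Proof. exact (ex_RInt_continuous (V:=R_CompleteNormedModule) f a b). Qed.

Lemma ex_derive_continuous_R (f : R -> R) x : ex_derive f x -> continuous f x.
Proof. exact (ex_derive_continuous (K:=R_AbsRing) (V:=R_NormedModule) f x). Qed.

Lemma Rint_RInt (f : R -> R) a b : ex_RInt f a b -> Rint f a b = RInt f a b.
Proof.
  intros H. unfold Rint.
  assert (Ex : exists I, exists pr : Riemann_integrable f a b, RiemannInt pr = I).
  { exists (RiemannInt (ex_RInt_Reals_0 f a b H)). eauto. }
  destruct (epsilon_spec (inhabits 0) _ Ex) as [pr <-].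
  symmetry. apply RInt_Reals.
Qed.

Lemma exp_le_compat x y : x <= y -> exp x <= exp y.
Proof. intros [H | ->]; [left; apply exp_increasing, H | right; reflexivity]. Qed.

Lemma derivable_pt_lim_const_fun (f : R -> R) l :
  (forall x, derivable_pt_lim f x 0) -> f l = f 0.
Proof.
  intros D. destruct (Rtotal_order l 0) as [Hl|[->|Hl]]; auto.
  - destruct (MVT_cor2 f (fun _ => 0) l 0 Hl (fun c _ => D c)) as [c [Hc _]]. lra.
  - destruct (MVT_cor2 f (fun _ => 0) 0 l Hl (fun c _ => D c)) as [c [Hc _]]. lra.
Qed.

(** * The Gaussian integral *)

Definition gauss (t : R) : R := exp (- (t * t)).
Definition gauss_int (x : R) : R := RInt gauss 0 x.

Definition feynman_integrand (x t : R) : R := exp (- (x * x) * (1 + t * t)) / (1 + t * t).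
Definition feynman (x : R) : R := RInt (feynman_integrand x) 0 1.

Lemma one_plus_sqr_pos t : 0 < 1 + t * t.
Proof. nra. Qed.

Lemma gauss_continuous x : continuous gauss x.
Proof. apply ex_derive_continuous_R. unfold gauss. auto_derive. auto. Qed.

Lemma ex_RInt_gauss a b : ex_RInt gauss a b.
Proof. apply ex_RInt_continuous_R. intros; apply gauss_continuous. Qed.

Lemma ex_RInt_gauss_lin c a b : ex_RInt (fun t => gauss (c * t + 0)) a b.
Proof. apply ex_RInt_continuous_R. intros. apply ex_derive_continuous_R. unfold gauss. auto_derive. auto. Qed.

Lemma is_derive_gauss_int x : is_derive gauss_int x (gauss x).
Proof.
  apply (is_derive_RInt gauss gauss_int 0 x).
  - apply filter_forall. intros b. apply (RInt_correct (V:=R_CompleteNormedModule)), ex_RInt_gauss.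
  - apply gauss_continuous.
Qed.

Lemma is_derive_feynman_integrand x t :
  is_derive (fun y => feynman_integrand y t) x (-2 * x * exp (- (x * x) * (1 + t * t))).
Proof.
  pose proof (one_plus_sqr_pos t). unfold feynman_integrand. auto_derive.
  - lra.
  - field. lra.
Qed.

Lemma feynman_integrand_continuous x t : continuous (feynman_integrand x) t.
Proof.
  apply ex_derive_continuous_R. unfold feynman_integrand. auto_derive.
  pose proof (one_plus_sqr_pos t). lra.
Qed.

Lemma ex_RInt_feynman_integrand x : ex_RInt (feynman_integrand x) 0 1.
Proof. apply ex_RInt_continuous_R. intros; apply feynman_integrand_continuous. Qed.

Lemma continuity_2d_feynman_derivative x t :
  continuity_2d_pt (fun x t => -2 * x * exp (- (x * x) * (1 + t * t))) x t.
Proof.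
  apply continuity_2d_pt_mult.
  - apply continuity_2d_pt_mult; [apply continuity_2d_pt_const | apply continuity_2d_pt_id1].
  - apply continuity_1d_2d_pt_comp.
    + apply derivable_continuous_pt, derivable_pt_exp.
    + apply continuity_2d_pt_mult.
      * apply continuity_2d_pt_opp, continuity_2d_pt_mult; apply continuity_2d_pt_id1.
      * apply continuity_2d_pt_plus; [apply continuity_2d_pt_const|].
        apply continuity_2d_pt_mult; apply continuity_2d_pt_id2.
Qed.

(* The substitution [u = x t] turns the parameter derivative into [-2 gauss x * gauss_int x]. *)
Lemma is_derive_feynman x : is_derive feynman x (-2 * gauss x * gauss_int x).
Proof.
  replace (-2 * gauss x * gauss_int x)
    with (RInt (fun t => Derive (fun y => feynman_integrand y t) x) 0 1).
  - apply (is_derive_RInt_param feynman_integrand 0 1 x).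
    + apply filter_forall. intros. eexists. apply is_derive_feynman_integrand.
    + intros. apply continuity_2d_pt_ext
        with (fun x t => -2 * x * exp (- (x * x) * (1 + t * t))).
      * intros. symmetry. apply is_derive_unique, is_derive_feynman_integrand.
      * apply continuity_2d_feynman_derivative.
    + apply filter_forall. intros. apply ex_RInt_feynman_integrand.
  - transitivity (RInt (fun t => (-2 * gauss x) * (x * gauss (x * t + 0))) 0 1).
    + apply RInt_ext_R. intros t _. rewrite (is_derive_unique (fun y : R => feynman_integrand y t) x _
        (is_derive_feynman_integrand x t)).
      unfold gauss.
      replace (- (x * x) * (1 + t * t)) with (- (x * x) + - ((x * t + 0) * (x * t + 0))) by ring.
      rewrite exp_plus. ring.
    + rewrite RInt_scal_R.
      * rewrite RInt_comp_lin_R by apply ex_RInt_gauss. unfold gauss_int. do 2 f_equal; ring.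
      * apply (ex_RInt_scal (V:=R_CompleteNormedModule) _ _ _ x), ex_RInt_gauss_lin.
Qed.

Lemma feynman_0 : feynman 0 = PI / 4.
Proof.
  unfold feynman.
  transitivity (RInt (fun t => / (1 + t²)) 0 1).
  { apply RInt_ext_R. intros t _. unfold feynman_integrand, Rsqr.
    replace (- (0 * 0) * (1 + t * t)) with 0 by ring.
    rewrite exp_0. field. pose proof (one_plus_sqr_pos t); lra. }
  rewrite <- atan_1. replace (atan 1) with (atan 1 - atan 0) by (rewrite atan_0; ring).
  apply (is_RInt_unique (V:=R_CompleteNormedModule)).
  apply (is_RInt_derive (V:=R_CompleteNormedModule) atan (fun t => / (1 + t²))).
  - intros. apply is_derive_atan.
  - intros. apply ex_derive_continuous_R.
    auto_derive. unfold Rsqr. pose proof (one_plus_sqr_pos x); lra.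
Qed.

(* Feynman's trick: the derivative of [gauss_int x ^ 2 + feynman x] vanishes. *)
Lemma gauss_int_sqr_add_feynman x : gauss_int x * gauss_int x + feynman x = PI / 4.
Proof.
  set (h := fun x => gauss_int x * gauss_int x + feynman x).
  change (h x = PI / 4).
  rewrite (derivable_pt_lim_const_fun h x).
  - assert (H0 : gauss_int 0 = 0) by apply (RInt_point (V:=R_CompleteNormedModule)).
    unfold h. rewrite feynman_0, H0. ring.
  - intros c. apply is_derive_Reals. unfold h.
    replace 0 with (gauss c * gauss_int c + gauss_int c * gauss c + (-2 * gauss c * gauss_int c)) by ring.
    apply (is_derive_plus (K:=R_AbsRing) (V:=R_NormedModule)); [|apply is_derive_feynman].
    apply (is_derive_mult (K:=R_AbsRing)); try apply is_derive_gauss_int.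
    intros; apply Rmult_comm.
Qed.

Lemma feynman_nonneg x : 0 <= feynman x.
Proof.
  apply RInt_ge_0; [lra | apply ex_RInt_feynman_integrand |].
  intros t _. unfold feynman_integrand. pose proof (one_plus_sqr_pos t).
  apply Rlt_le, Rdiv_lt_0_compat; auto. apply exp_pos.
Qed.

Lemma feynman_le_gauss x : feynman x <= gauss x.
Proof.
  unfold feynman. replace (gauss x) with (RInt (fun _ => gauss x) 0 1 : R) by (rewrite RInt_const_R; ring).
  apply RInt_le; [lra | apply ex_RInt_feynman_integrand | apply ex_RInt_continuous_R; intros; apply continuous_const |].
  intros t _. unfold feynman_integrand, gauss. pose proof (one_plus_sqr_pos t).
  assert (exp (- (x * x) * (1 + t * t)) <= exp (- (x * x))).
  { apply exp_le_compat. assert (0 <= x * x * (t * t)) by (apply Rmult_le_pos; nra). nra. }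
  apply Rmult_le_reg_r with (1 + t * t); auto.
  unfold Rdiv. rewrite Rmult_assoc, Rinv_l by lra.
  assert (0 < exp (- (x * x))) by apply exp_pos. nra.
Qed.

Lemma gauss_le_inv x : 0 < x -> gauss x <= / x.
Proof.
  intros Hx. unfold gauss. rewrite exp_Ropp.
  apply Rinv_le_contravar; auto. pose proof (exp_ineq1_le (x * x)). nra.
Qed.

Lemma gauss_int_nonneg x : 0 <= x -> 0 <= gauss_int x.
Proof.
  intros Hx. apply RInt_ge_0; auto; [apply ex_RInt_gauss|].
  intros; unfold gauss; left; apply exp_pos.
Qed.

Lemma sqrt_PI_pos : 0 < sqrt PI.
Proof. apply sqrt_lt_R0, PI_RGT_0. Qed.

(* From [gauss_int x ^ 2 = PI/4 - feynman x] and [0 <= feynman x <= gauss x <= 1/x]. *)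
Lemma gauss_int_tends eps : 0 < eps ->
  exists X, forall x, X <= x -> Rabs (gauss_int x - sqrt PI / 2) < eps.
Proof.
  intros He. set (c := sqrt PI / 2).
  assert (Hc : 0 < c) by (unfold c; pose proof sqrt_PI_pos; lra).
  assert (Hc2 : c * c = PI / 4).
  { unfold c. replace (sqrt PI / 2 * (sqrt PI / 2)) with (sqrt PI * sqrt PI / 4) by field.
    rewrite sqrt_sqrt; [lra | left; apply PI_RGT_0]. }
  exists (2 / (eps * c) + 1). intros x Hx.
  assert (H2 : 0 < 2 / (eps * c)) by (apply Rdiv_lt_0_compat; [lra | nra]).
  assert (Hx0 : 0 < x) by lra.
  pose proof (gauss_int_sqr_add_feynman x). pose proof (feynman_nonneg x).
  pose proof (feynman_le_gauss x). pose proof (gauss_le_inv x Hx0).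
  pose proof (gauss_int_nonneg x (Rlt_le _ _ Hx0)).
  assert (Hsmall : / x < eps * c).
  { apply Rmult_lt_reg_l with x; auto. rewrite Rinv_r by lra.
    assert (E : 2 / (eps * c) * (eps * c) = 2) by (field; lra). nra. }
  rewrite Rabs_left1 by nra. nra.
Qed.

(** * The standard normal distribution *)

Definition Phi0 (x : R) : R := RInt phi_std 0 x.

Lemma phi_std_pos t : 0 < phi_std t.
Proof.
  unfold phi_std. apply Rdiv_lt_0_compat; [apply exp_pos|].
  apply sqrt_lt_R0. pose proof PI_RGT_0; lra.
Qed.

Lemma phi_std_continuous t : continuous phi_std t.
Proof.
  apply ex_derive_continuous_R. unfold phi_std. auto_derive.
  assert (0 < sqrt (2 * PI)) by (apply sqrt_lt_R0; pose proof PI_RGT_0; lra). lra.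
Qed.

Lemma phi_std_opp t : phi_std (- t) = phi_std t.
Proof. unfold phi_std. replace ((- t) ^ 2) with (t ^ 2) by ring. reflexivity. Qed.

Lemma ex_RInt_phi_std a b : ex_RInt phi_std a b.
Proof. apply ex_RInt_continuous_R. intros; apply phi_std_continuous. Qed.

Lemma phi_std_gauss t : phi_std t = / sqrt PI * (/ sqrt 2 * gauss (/ sqrt 2 * t + 0)).
Proof.
  pose proof (sqrt_lt_R0 2 ltac:(lra)). pose proof sqrt_PI_pos.
  assert (H2 : sqrt 2 * sqrt 2 = 2) by (apply sqrt_sqrt; lra).
  unfold phi_std, gauss. rewrite sqrt_mult by (try lra; left; apply PI_RGT_0).
  replace (- t ^ 2 / 2) with (- ((/ sqrt 2 * t + 0) * (/ sqrt 2 * t + 0))).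
  - field. lra.
  - replace ((/ sqrt 2 * t + 0) * (/ sqrt 2 * t + 0)) with (/ (sqrt 2 * sqrt 2) * (t * t))
      by (field; lra).
    rewrite H2. field.
Qed.

Lemma Phi0_gauss_int x : Phi0 x = / sqrt PI * gauss_int (/ sqrt 2 * x).
Proof.
  unfold Phi0, gauss_int.
  rewrite (RInt_ext_R phi_std (fun t => / sqrt PI * (/ sqrt 2 * gauss (/ sqrt 2 * t + 0))))
    by (intros; apply phi_std_gauss).
  rewrite RInt_scal_R.
  - rewrite RInt_comp_lin_R by apply ex_RInt_gauss. do 2 f_equal; ring.
  - apply (ex_RInt_scal (V:=R_CompleteNormedModule) _ _ _ (/ sqrt 2)), ex_RInt_gauss_lin.
Qed.

Lemma Phi0_tends eps : 0 < eps -> exists X, forall x, X <= x -> Rabs (Phi0 x - / 2) < eps.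
Proof.
  intros He. pose proof (sqrt_lt_R0 2 ltac:(lra)). pose proof sqrt_PI_pos.
  destruct (gauss_int_tends (eps * sqrt PI)) as [X HX]; [nra|].
  exists (sqrt 2 * X). intros x Hx. rewrite Phi0_gauss_int.
  assert (HXx : X <= / sqrt 2 * x).
  { apply Rmult_le_reg_l with (sqrt 2); auto. rewrite <- Rmult_assoc, Rinv_r by lra. lra. }
  specialize (HX _ HXx).
  replace (/ sqrt PI * gauss_int (/ sqrt 2 * x) - / 2)
    with (/ sqrt PI * (gauss_int (/ sqrt 2 * x) - sqrt PI / 2)) by (field; lra).
  rewrite Rabs_mult, Rabs_right by (left; apply Rinv_0_lt_compat; auto).
  apply Rmult_lt_reg_l with (sqrt PI); auto. rewrite <- Rmult_assoc, Rinv_r by lra. lra.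
Qed.

Lemma Phi0_opp x : Phi0 (- x) = - Phi0 x.
Proof.
  unfold Phi0.
  assert (E := RInt_comp_lin_R phi_std (-1) 0 0 x (ex_RInt_phi_std _ _)).
  replace (-1 * 0 + 0) with 0 in E by ring. replace (-1 * x + 0) with (- x) in E by ring.
  rewrite <- E, (RInt_ext_R _ (fun y => -1 * phi_std y)).
  - rewrite RInt_scal_R by apply ex_RInt_phi_std. ring.
  - intros y _. replace (-1 * y + 0) with (- y) by ring. rewrite phi_std_opp. ring.
Qed.

(* Split [Rint phi_std (-n) x] at 0 and use [Phi0 (-n) = - Phi0 n]. *)
Lemma Phi_Phi0 x : Phi x = Phi0 x + / 2.
Proof.
  assert (Hcv : Un_cv (fun n => Rint phi_std (- INR n) x) (Phi0 x + / 2)).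
  { intros eps He. destruct (Phi0_tends eps He) as [X HX].
    destruct (INR_unbounded (Rmax X 0)) as [n0 Hn0].
    exists n0. intros n Hn. unfold Rdist.
    rewrite Rint_RInt by apply ex_RInt_phi_std.
    rewrite <- (RInt_Chasles (V:=R_CompleteNormedModule) phi_std (- INR n) 0 x)
      by apply ex_RInt_phi_std.
    assert (E : RInt phi_std (- INR n) 0 = Phi0 (INR n)).
    { rewrite <- (opp_RInt_swap (V:=R_CompleteNormedModule)) by apply ex_RInt_phi_std.
      change (- Phi0 (- INR n) = Phi0 (INR n)). rewrite Phi0_opp. ring. }
    rewrite E. change (Rabs (Phi0 (INR n) + Phi0 x - (Phi0 x + / 2)) < eps).
    replace (Phi0 (INR n) + Phi0 x - (Phi0 x + / 2)) with (Phi0 (INR n) - / 2) by ring.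
    apply HX. apply le_INR in Hn. pose proof (Rmax_l X 0). lra. }
  unfold Phi. apply (UL_sequence (fun n => Rint phi_std (- INR n) x)); auto.
  apply epsilon_spec. eauto.
Qed.

Lemma derivable_pt_lim_Phi x : derivable_pt_lim Phi x (phi_std x).
Proof.
  apply is_derive_Reals.
  apply (is_derive_ext (fun x => Phi0 x + / 2)); [intros; symmetry; apply Phi_Phi0|].
  replace (phi_std x) with (phi_std x + 0) by ring.
  apply (is_derive_plus (K:=R_AbsRing) (V:=R_NormedModule)).
  - apply (is_derive_RInt phi_std Phi0 0 x).
    + apply filter_forall. intros. apply (RInt_correct (V:=R_CompleteNormedModule)), ex_RInt_phi_std.
    + apply phi_std_continuous.
  - apply (is_derive_const (K:=R_AbsRing) (V:=R_NormedModule)).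
Qed.

Lemma derivable_pt_Phi x : derivable_pt Phi x.
Proof. exists (phi_std x). apply derivable_pt_lim_Phi. Qed.

Lemma Phi_continuous x : continuity_pt Phi x.
Proof. apply derivable_continuous_pt, derivable_pt_Phi. Qed.

Lemma Phi_increasing x y : x < y -> Phi x < Phi y.
Proof.
  intros H. destruct (MVT_cor2 Phi phi_std x y H (fun c _ => derivable_pt_lim_Phi c)) as [c [Hc _]].
  pose proof (phi_std_pos c). nra.
Qed.

Lemma Phi_tends_1 eps : 0 < eps -> exists X, forall x, X <= x -> Rabs (Phi x - 1) < eps.
Proof.
  intros He. destruct (Phi0_tends eps He) as [X HX]. exists X. intros x Hx.
  rewrite Phi_Phi0. replace (Phi0 x + / 2 - 1) with (Phi0 x - / 2) by field. auto.
Qed.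

Lemma Phi_opp x : Phi (- x) = 1 - Phi x.
Proof. rewrite !Phi_Phi0, Phi0_opp. field. Qed.

Lemma Phi_surjective y : 0 < y < 1 -> exists x, Phi x = y.
Proof.
  intros Hy.
  destruct (Phi_tends_1 (1 - y) ltac:(lra)) as [B HB].
  destruct (Phi_tends_1 y ltac:(lra)) as [A HA].
  set (a := - Rmax A 0 - 1). set (b := Rmax B 0 + 1).
  assert (Ha : Phi a < y).
  { specialize (HA (- a) ltac:(unfold a; pose proof (Rmax_l A 0); lra)).
    rewrite Phi_opp in HA. apply Rabs_def2 in HA. lra. }
  assert (Hb : y < Phi b).
  { specialize (HB b ltac:(unfold b; pose proof (Rmax_l B 0); lra)). apply Rabs_def2 in HB. lra. }
  assert (Hab : a < b) by (unfold a, b; pose proof (Rmax_r A 0); pose proof (Rmax_r B 0); lra).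
  destruct (f_interv_is_interv Phi a b y Hab ltac:(lra) (fun x _ => Phi_continuous x)) as [x [_ Hx]].
  eauto.
Qed.

Lemma Phi_Phi_inv y : 0 < y < 1 -> Phi (Phi_inv y) = y.
Proof. intros Hy. unfold Phi_inv. apply epsilon_spec, Phi_surjective, Hy. Qed.

Lemma Phi_inv_increasing y1 y2 : 0 < y1 -> y1 < y2 -> y2 < 1 -> Phi_inv y1 < Phi_inv y2.
Proof.
  intros. destruct (Rlt_or_le (Phi_inv y1) (Phi_inv y2)) as [h|[h|h]]; auto.
  - apply Phi_increasing in h. rewrite !Phi_Phi_inv in h by lra. lra.
  - apply (f_equal Phi) in h. rewrite !Phi_Phi_inv in h by lra. lra.
Qed.

Lemma Phi_inv_le y1 y2 : 0 < y1 -> y1 <= y2 -> y2 < 1 -> Phi_inv y1 <= Phi_inv y2.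
Proof. intros ? [H|<-] ?; [left; apply Phi_inv_increasing | right]; auto. Qed.

Lemma derivable_pt_lim_Phi_inv y : 0 < y < 1 ->
  derivable_pt_lim Phi_inv y (/ phi_std (Phi_inv y)).
Proof.
  intros Hy. set (lb := y / 2). set (ub := (1 + y) / 2).
  assert (Hlb : 0 < lb < y) by (unfold lb; lra). assert (Hub : y < ub < 1) by (unfold ub; lra).
  assert (Hcont : continuity_pt Phi_inv y).
  { apply (continuity_pt_recip_interv Phi Phi_inv (Phi_inv lb) (Phi_inv ub)).
    - apply Phi_inv_increasing; lra.
    - intros a b _ Hab _. apply Phi_increasing; auto.
    - rewrite !Phi_Phi_inv by lra. intros z H1 H2. unfold comp, id. apply Phi_Phi_inv. lra.
    - rewrite !Phi_Phi_inv by lra. intros z H1 H2. split; apply Phi_inv_le; lra.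
    - intros; apply Phi_continuous.
    - rewrite !Phi_Phi_inv by lra. lra. }
  assert (Hmono : Phi_inv lb <= Phi_inv y <= Phi_inv ub) by (split; apply Phi_inv_le; lra).
  assert (Hcomp : forall z, lb <= z <= ub -> comp Phi Phi_inv z = id z)
    by (intros z Hz; unfold comp, id; apply Phi_Phi_inv; lra).
  assert (Hlu : lb < ub) by lra. assert (Hy' : lb < y < ub) by lra.
  assert (D := derivable_pt_lim_recip_interv Phi Phi_inv lb ub y
    (fun a _ => derivable_pt_Phi a) Hcont Hlu Hy' Hmono Hcomp).
  rewrite (derive_pt_eq_0 Phi (Phi_inv y) _ _ (derivable_pt_lim_Phi _)) in D.
  replace (/ phi_std (Phi_inv y)) with (1 / phi_std (Phi_inv y)) by (unfold Rdiv; ring).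
  apply D. pose proof (phi_std_pos (Phi_inv y)). lra.
Qed.

(* The density of [Q] is a likelihood ratio of two Gaussians, hence an exponential. *)
Lemma qBS_eq M x : 0 < x < 1 -> qBS M x = exp (- M * Phi_inv x - M * M / 2).
Proof.
  intros Hx.
  assert (D : derivable_pt_lim (Qfun M) x (phi_std (M + Phi_inv x) * / phi_std (Phi_inv x))).
  { apply (derivable_pt_lim_comp (fun z => M + Phi_inv z) Phi); [|apply derivable_pt_lim_Phi].
    rewrite <- (Rplus_0_l (/ phi_std (Phi_inv x))).
    apply (derivable_pt_lim_plus (fun _ => M)).
    - apply derivable_pt_lim_const.
    - apply derivable_pt_lim_Phi_inv, Hx. }
  unfold qBS.
  pose proof (epsilon_spec (inhabits 0) (fun l => derivable_pt_lim (Qfun M) x l) (ex_intro _ _ D)) as Hl.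
  rewrite (uniqueness_limite _ _ _ _ Hl D).
  unfold phi_std. set (z := Phi_inv x).
  assert (0 < sqrt (2 * PI)) by (apply sqrt_lt_R0; pose proof PI_RGT_0; lra).
  replace (- M * z - M * M / 2) with (- (M + z) ^ 2 / 2 + - (- z ^ 2 / 2)) by field.
  rewrite exp_plus, exp_Ropp. field. pose proof (exp_pos (- z ^ 2 / 2)). split; lra.
Qed.

Lemma qBS_pos M x : 0 < x < 1 -> 0 < qBS M x.
Proof. intros. rewrite qBS_eq; auto. apply exp_pos. Qed.

Lemma qBS_antitone M x1 x2 : 0 <= M -> 0 < x1 -> x1 <= x2 -> x2 < 1 -> qBS M x2 <= qBS M x1.
Proof.
  intros HM H1 H12 H2. rewrite !qBS_eq by lra. apply exp_le_compat.
  assert (Phi_inv x1 <= Phi_inv x2) by (apply Phi_inv_le; lra). nra.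
Qed.

Lemma glb_exists (S : R -> Prop) b :
  (exists x, S x) -> is_lower_bound S b -> exists m, is_glb S m.
Proof.
  intros [x0 Hx0] Hb.
  destruct (completeness (fun y => S (- y))) as [l [Hl1 Hl2]].
  - exists (- b). intros y Hy. specialize (Hb _ Hy). lra.
  - exists (- x0). rewrite Ropp_involutive. auto.
  - exists (- l). split.
    + intros x Hx. assert (- x <= l) by (apply Hl1; rewrite Ropp_involutive; auto). lra.
    + intros c Hc. assert (l <= - c); [|lra].
      apply Hl2. intros y Hy. specialize (Hc _ Hy). lra.
Qed.

Lemma glb_approx (S : R -> Prop) m e : is_glb S m -> 0 < e -> exists x, S x /\ x < m + e.
Proof.
  intros [_ Hm] He. apply NNPP. intros Hno. assert (m + e <= m); [|lra].
  apply Hm. intros x Hx. apply Rnot_lt_le. intros Hlt. apply Hno. eauto.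
Qed.

Lemma unbounded_of_no_glb (S : R -> Prop) K :
  (exists x, S x) -> ~ (exists m, is_glb S m) -> exists x, S x /\ x < K.
Proof.
  intros Hne Hno. apply NNPP. intros Hlow. apply Hno, (glb_exists S K Hne).
  intros x Hx. apply Rnot_lt_le. intros Hlt. apply Hlow. eauto.
Qed.

(** * Riemann integrability of monotone functions *)

Fixpoint grid_count (lo d : R) (n : nat) (z : R) : R :=
  match n with
  | O => 0
  | S k => grid_count lo d k z + (if Rle_dec (lo + INR (S k) * d) z then 1 else 0)
  end.

Lemma grid_count_full lo d n z : 0 < d -> lo + INR n * d <= z -> grid_count lo d n z = INR n.
Proof.
  intros Hd. induction n as [|k IH]; intros H; cbn [grid_count]; [reflexivity|].
  rewrite S_INR in H. rewrite IH by lra.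
  destruct (Rle_dec _ _) as [_|h]; [rewrite S_INR; ring|]. rewrite S_INR in h. lra.
Qed.

Lemma grid_count_bracket lo d n z : 0 < d -> lo <= z <= lo + INR n * d ->
  lo + d * grid_count lo d n z <= z <= lo + d * grid_count lo d n z + d.
Proof.
  intros Hd. induction n as [|k IH]; intros H; cbn [grid_count].
  - simpl in H. lra.
  - rewrite S_INR in *. destruct (Rle_dec (lo + INR k * d) z) as [h|h].
    + rewrite (grid_count_full lo d k z Hd h).
      destruct (Rle_dec _ _); rewrite ?S_INR in *; lra.
    + specialize (IH ltac:(lra)). destruct (Rle_dec _ _); rewrite ?S_INR in *; lra.
Qed.

Definition indic_ge (f : R -> R) (y x : R) : R := if Rle_dec y (f x) then 1 else 0.

Section Monotone.

Variables (f : R -> R) (a b : R).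
Hypothesis Hab : a < b.
Hypothesis Hmono : forall x z, a < x -> x <= z -> z < b -> f x <= f z.

Lemma superlevel_cut y : exists t, a <= t <= b /\
  (forall z, a < z < t -> indic_ge f y z = 0) /\ (forall z, t < z < b -> indic_ge f y z = 1).
Proof.
  destruct (classic (exists x, (a < x < b /\ y <= f x))) as [Hex | Hno].
  - destruct (glb_exists _ a Hex) as [t [Hlow Hgreat]]; [intros x Hx; lra|].
    destruct Hex as [x1 Hx1].
    assert (Ht : a <= t <= x1) by (split; [apply Hgreat; intros x Hx; lra | apply Hlow; auto]).
    exists t. split; [lra | split]; intros z Hz; unfold indic_ge.
    + destruct (Rle_dec y (f z)); auto. assert (t <= z) by (apply Hlow; split; [lra | auto]). lra.
    + destruct (Rle_dec y (f z)) as [h|h]; auto. exfalso.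
      assert (z <= t); [|lra].
      apply Hgreat. intros w [Hw1 Hw2]. apply Rnot_lt_le. intros Hwz.
      apply h, Rle_trans with (f w); auto. apply Hmono; lra.
  - exists b. split; [lra | split]; intros z Hz; [|lra]. unfold indic_ge.
    destruct (Rle_dec y (f z)); auto. exfalso; apply Hno; exists z; split; [lra | auto].
Qed.

Lemma IsStepFun_indic_ge y : IsStepFun (indic_ge f y) a b.
Proof.
  destruct (constructive_indefinite_description _ (superlevel_cut y)) as [t [Ht [H0 H1]]].
  exists (cons a (cons t (cons b nil))), (cons 0 (cons 1 nil)).
  repeat split.
  - intros i Hi. simpl in Hi. destruct i as [|[|i]]; simpl; lia || lra.
  - simpl. unfold Rmin. destruct (Rle_dec a b); lra.
  - simpl. unfold Rmax. destruct (Rle_dec a b); lra.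
  - intros i Hi. simpl in Hi. unfold constant_D_eq, open_interval.
    destruct i as [|[|i]]; simpl; intros x Hx; [apply H0 | apply H1 | lia]; lra.
Qed.

Lemma IsStepFun_grid_count lo d n : IsStepFun (fun x => grid_count lo d n (f x)) a b.
Proof.
  induction n as [|k IH]; [exact (StepFun_P4 a b 0)|].
  replace (fun x => grid_count lo d (S k) (f x))
    with (fun x => grid_count lo d k (f x) + 1 * indic_ge f (lo + INR (S k) * d) x).
  - exact (StepFun_P28 1 (mkStepFun IH) (mkStepFun (IsStepFun_indic_ge _))).
  - apply functional_extensionality. intros x. cbn [grid_count]. unfold indic_ge. ring.
Qed.

(* [lo + d * grid_count lo d n (f x)] is a step function within [d] of [f]. *)
Lemma Riemann_integrable_monotone lo hi :
  lo < hi -> (forall x, a <= x <= b -> lo <= f x <= hi) -> Riemann_integrable f a b.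
Proof.
  intros Hlh Hbnd eps.
  assert (Ex : exists n : nat, (0 < n)%nat /\ (hi - lo) / INR n < eps / (b - a)).
  { destruct (archimed_cor1 (eps / (b - a) / (hi - lo))) as [n [Hn1 Hn2]].
    - apply Rdiv_lt_0_compat; [apply Rdiv_lt_0_compat|]; [apply cond_pos | lra | lra].
    - exists n. split; auto. apply lt_0_INR in Hn2.
      apply Rmult_lt_reg_r with (/ (hi - lo)); [apply Rinv_0_lt_compat; lra|].
      replace ((hi - lo) / INR n * / (hi - lo)) with (/ INR n) by (field; lra). exact Hn1. }
  destruct (constructive_indefinite_description _ Ex) as [n [Hn Hd]].
  set (d := (hi - lo) / INR n) in *.
  assert (Hn' : 0 < INR n) by (apply lt_0_INR; auto).
  assert (Hdp : 0 < d) by (unfold d; apply Rdiv_lt_0_compat; lra).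
  assert (HnD : INR n * d = hi - lo) by (unfold d; field; lra).
  exists (mkStepFun (StepFun_P28 d (mkStepFun (StepFun_P4 a b lo))
    (mkStepFun (IsStepFun_grid_count lo d n)))).
  exists (mkStepFun (StepFun_P4 a b d)).
  split.
  - intros t Ht. simpl. unfold fct_cte.
    assert (Ht' : a <= t <= b) by (unfold Rmin, Rmax in Ht; destruct (Rle_dec a b); lra).
    pose proof (grid_count_bracket lo d n (f t) Hdp ltac:(specialize (Hbnd t Ht'); lra)).
    apply Rabs_le. lra.
  - rewrite StepFun_P18, Rabs_right by nra.
    apply Rmult_lt_reg_r with (/ (b - a)); [apply Rinv_0_lt_compat; lra|].
    replace (d * (b - a) * / (b - a)) with d by (field; lra). exact Hd.
Qed.

End Monotone.

(** * Superdifferentials and generalized inverses *)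

Lemma superdiff_antitone (g : R -> ER) x1 x2 p1 p2 :
  superdiff g x1 p1 -> superdiff g x2 p2 -> p1 < p2 -> x2 <= x1.
Proof.
  intros [a1 [E1 H1]] [a2 [E2 H2]] Hp.
  specialize (H1 x2). specialize (H2 x1). rewrite E2 in H1. rewrite E1 in H2. simpl in H1, H2.
  apply Rnot_lt_le. intros h. nra.
Qed.

Lemma superdiff_dom (g : R -> ER) x p : superdiff g x p -> dom_ext g x.
Proof. intros [gx [E _]]. unfold dom_ext. rewrite E. discriminate. Qed.

Lemma dagger_is_glb (g : R -> ER) p :
  (exists m, is_glb (dagger_set g p) m) -> is_glb (dagger_set g p) (dagger g p).
Proof. intros H. unfold dagger. apply epsilon_spec, H. Qed.

Lemma dagger_nonempty (g : R -> ER) p :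
  (exists m, is_glb (dagger_set g p) m) -> exists x, superdiff g x p.
Proof.
  intros Hg. destruct (glb_approx _ _ 1 (dagger_is_glb g p Hg)) as [x [Hx _]]; [lra|]. eauto.
Qed.

Lemma dagger_antitone (g : R -> ER) p1 p2 : p1 <= p2 ->
  (exists m, is_glb (dagger_set g p1) m) -> (exists m, is_glb (dagger_set g p2) m) ->
  dagger g p2 <= dagger g p1.
Proof.
  intros [Hp | <-] G1 G2; [|lra].
  destruct (dagger_nonempty g p2 G2) as [x2 Hx2].
  apply (dagger_is_glb g p1 G1). intros x1 Hx1.
  apply Rle_trans with x2.
  - apply (dagger_is_glb g p2 G2), Hx2.
  - apply (superdiff_antitone g x1 x2 p1 p2); auto.
Qed.

(** * The piecewise linear utility [v] *)

Lemma grid_ge_first (xs : nat -> R) N : (forall i, (S i < N)%nat -> xs i < xs (S i)) ->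
  forall i, (i < N)%nat -> xs 0%nat <= xs i.
Proof.
  intros Hg i. induction i as [|i IH]; intros Hi; [lra|].
  specialize (IH ltac:(lia)). specialize (Hg i Hi). lra.
Qed.

Lemma exists_argmax_below (h : nat -> R) n : (1 <= n)%nat ->
  exists j, (j < n)%nat /\ forall i, (i < n)%nat -> h i <= h j.
Proof.
  induction n as [|n IH]; intros Hn; [lia|].
  destruct (Nat.eq_dec n 0) as [->|Hn0].
  - exists 0%nat. split; [lia|]. intros i Hi. replace i with 0%nat by lia. lra.
  - destruct (IH ltac:(lia)) as [j [Hj1 Hj2]].
    destruct (Rle_or_lt (h n) (h j)) as [c|c].
    + exists j. split; [lia|]. intros i Hi.
      destruct (Nat.eq_dec i n) as [->|ne]; auto. apply Hj2; lia.
    + exists n. split; [lia|]. intros i Hi.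
      destruct (Nat.eq_dec i n) as [->|ne]; [lra|]. specialize (Hj2 i ltac:(lia)). lra.
Qed.

Lemma grid_segment (xs : nat -> R) y : forall k, xs 0%nat <= y -> y <= xs k ->
  y = xs 0%nat \/ exists i, (S i <= k)%nat /\ xs i <= y <= xs (S i).
Proof.
  induction k as [|k IH]; intros H1 H2; [left; lra|].
  destruct (Rle_or_lt y (xs k)) as [c|c].
  - destruct (IH H1 c) as [h|[i [Hi Hy]]]; auto. right. exists i. split; [lia | auto].
  - right. exists k. split; [lia | lra].
Qed.

Definition gamma_arg (v : R -> ER) (mu r sigma dt s : R) (C : nat) (eta : R) : R :=
  - (eta / dt) * / (-1 + s * Rint (fun x => 1 + valR (v (f_eta v mu r sigma dt s C eta x))) 0 1).

Lemma inv_gap_lower dt s c I eta : 0 < dt -> 0 < s < 1 -> c <= I <= 1 -> 0 < eta ->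
  eta / (dt * (1 - s * c)) <= - (eta / dt) * / (-1 + s * I).
Proof.
  intros Hdt Hs HI Heta. assert (0 < 1 - s * I) by nra.
  replace (- (eta / dt) * / (-1 + s * I)) with (eta / (dt * (1 - s * I))) by (field; lra).
  apply Rmult_le_compat_l; [lra|]. apply Rinv_le_contravar; [nra|].
  apply Rmult_le_compat_l; nra.
Qed.

Section PiecewiseLinear.

Variables (v : R -> ER) (N : nat) (xs : nat -> R).
Hypothesis HN : (1 <= N)%nat.
Hypothesis Hgrid : forall i, (S i < N)%nat -> xs i < xs (S i).
Hypothesis Hv_low : forall x, x < xs 0%nat -> v x = None.
Hypothesis Hv_fin : forall x, xs 0%nat <= x -> exists a, v x = Some a.
Hypothesis Hv_top : forall x, xs (N - 1)%nat <= x -> v x = v (xs (N - 1)%nat).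
Hypothesis Hv_lin : forall i, (S i < N)%nat -> exists a b,
  forall x, xs i <= x <= xs (S i) -> v x = Some (a * x + b).
Hypothesis Hv_incr : nondecreasing_ext v.
Hypothesis Hv_nonpos : forall x a, v x = Some a -> a <= 0.

Lemma v_finite x : xs 0%nat <= x -> v x = Some (valR (v x)).
Proof. intros Hx. destruct (Hv_fin x Hx) as [a Ha]. rewrite Ha. reflexivity. Qed.

(* [v y - p y] is affine on each grid segment and constant-minus-linear beyond the
   grid, so a grid point maximizing it is a superdifferential point. *)
Lemma v_superdiff_exists p : 0 <= p -> exists x, superdiff v x p.
Proof.
  intros Hp. set (h := fun i => valR (v (xs i)) - p * xs i).
  destruct (exists_argmax_below h N HN) as [j [Hj Hmax]].
  assert (Gl := grid_ge_first xs N Hgrid).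
  exists (xs j), (valR (v (xs j))). split; [apply v_finite, Gl; auto|].
  intros y. destruct (Rlt_or_le y (xs 0%nat)) as [c1|c1]; [rewrite Hv_low; simpl; auto|].
  destruct (Rle_or_lt (xs (N - 1)%nat) y) as [c2|c2].
  { rewrite Hv_top, v_finite by (auto; apply Gl; lia). simpl.
    specialize (Hmax (N - 1)%nat ltac:(lia)). unfold h in Hmax. nra. }
  destruct (grid_segment xs y (N - 1)%nat c1 (Rlt_le _ _ c2)) as [E|[i [Hi Hy]]].
  { subst y. rewrite v_finite by lra. simpl. specialize (Hmax 0%nat ltac:(lia)). unfold h in Hmax. lra. }
  destruct (Hv_lin i ltac:(lia)) as [a [b Hab]].
  pose proof (Hgrid i ltac:(lia)).
  pose proof (Hmax i ltac:(lia)) as M1. pose proof (Hmax (S i) ltac:(lia)) as M2.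
  unfold h in M1, M2. rewrite (Hab (xs i)) in M1 by lra. rewrite (Hab (xs (S i))) in M2 by lra.
  rewrite (Hab y Hy). simpl in *.
  destruct (Rle_or_lt 0 (a - p)) as [c|c].
  - assert (0 <= (a - p) * (xs (S i) - y)) by (apply Rmult_le_pos; lra). nra.
  - assert (0 <= (p - a) * (y - xs i)) by (apply Rmult_le_pos; lra). nra.
Qed.

Lemma superdiff_v_ge x p : superdiff v x p -> xs 0%nat <= x.
Proof.
  intros Hx. apply Rnot_lt_le. intros Hlt.
  apply (superdiff_dom v x p Hx), Hv_low, Hlt.
Qed.

Lemma dagger_v_is_glb p : 0 <= p -> exists m, is_glb (dagger_set v p) m.
Proof.
  intros Hp. apply (glb_exists _ (xs 0%nat)); [apply v_superdiff_exists, Hp|].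
  intros x Hx. apply (superdiff_v_ge x p Hx).
Qed.

Lemma dagger_v_ge p : 0 <= p -> xs 0%nat <= dagger v p.
Proof.
  intros Hp. apply (dagger_is_glb v p (dagger_v_is_glb p Hp)).
  intros x Hx. apply (superdiff_v_ge x p Hx).
Qed.

Lemma valR_v_bounds y : valR (v (xs 0%nat)) <= valR (v y) <= 0.
Proof.
  destruct (Rlt_or_le y (xs 0%nat)) as [c|c].
  - rewrite (Hv_low y c). simpl. rewrite v_finite by lra. split; [apply (Hv_nonpos (xs 0%nat)), v_finite|]; lra.
  - pose proof (Hv_incr _ _ c) as Hi. rewrite (v_finite _ c), v_finite in Hi by lra. simpl in Hi.
    split; auto. apply (Hv_nonpos y), v_finite, c.
Qed.

Lemma valR_v_monotone y1 y2 : xs 0%nat <= y1 -> y1 <= y2 -> valR (v y1) <= valR (v y2).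
Proof.
  intros H1 H2. pose proof (Hv_incr _ _ H2) as Hi.
  rewrite (v_finite y1), (v_finite y2) in Hi by lra. exact Hi.
Qed.

(* The integrand is monotone in [x]: [qBS] and [dagger v] are antitone, [v] is monotone. *)
Lemma Rint_utility_bounds M K : 0 <= M -> 0 < K ->
  1 + valR (v (xs 0%nat)) <= Rint (fun x => 1 + valR (v (dagger v (K * qBS M x)))) 0 1 <= 1.
Proof.
  intros HM HK. set (g := fun x => 1 + valR (v (dagger v (K * qBS M x)))).
  assert (Hb : forall x, 1 + valR (v (xs 0%nat)) <= g x <= 1)
    by (intros x; unfold g; pose proof (valR_v_bounds (dagger v (K * qBS M x))); lra).
  assert (Hint : Riemann_integrable g 0 1).
  { apply (Riemann_integrable_monotone g 0 1 ltac:(lra)) with (1 + valR (v (xs 0%nat))) 2.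
    - intros x z Hx Hxz Hz. unfold g. apply Rplus_le_compat_l.
      pose proof (qBS_pos M x ltac:(lra)). pose proof (qBS_pos M z ltac:(lra)).
      pose proof (qBS_antitone M x z HM Hx Hxz Hz).
      apply valR_v_monotone; [apply dagger_v_ge; nra|].
      apply dagger_antitone; [nra | apply dagger_v_is_glb; nra | apply dagger_v_is_glb; nra].
    - pose proof (Hb 0). pose proof (valR_v_bounds (xs 0%nat)). lra.
    - intros x _. specialize (Hb x). lra. }
  assert (Hex : ex_RInt g 0 1) by (apply ex_RInt_Reals_1, Hint).
  assert (Hcst : forall c, ex_RInt (fun _ => c) 0 1)
    by (intros; apply ex_RInt_continuous_R; intros; apply continuous_const).
  fold g. rewrite Rint_RInt by exact Hex. split.
  - replace (1 + valR (v (xs 0%nat))) with (RInt (fun _ => 1 + valR (v (xs 0%nat))) 0 1 : R)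
      by (rewrite RInt_const_R; ring).
    apply RInt_le; auto; [lra|]. intros; apply Hb.
  - replace 1 with (RInt (fun _ => 1) 0 1 : R) at 2 by (rewrite RInt_const_R; ring).
    apply RInt_le; auto; [lra|]. intros; apply Hb.
Qed.

Lemma gamma_arg_unbounded mu r sigma dt s C :
  0 < sigma -> 0 < dt -> 0 < s < 1 -> forall P, exists H, forall eta, H < eta ->
  P < gamma_arg v mu r sigma dt s C eta.
Proof.
  intros Hsigma Hdt Hs P. unfold gamma_arg. set (c := 1 + valR (v (xs 0%nat))).
  assert (HM : 0 <= Mpar mu r sigma dt).
  { unfold Mpar. apply Rmult_le_pos; [apply Rmult_le_pos; [apply Rabs_pos | apply sqrt_pos]|].
    left; apply Rinv_0_lt_compat, Hsigma. }
  assert (Hc : c <= 1) by (unfold c; pose proof (valR_v_bounds (xs 0%nat)); lra).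
  exists (Rmax 0 (Rabs P * dt * (1 - s * c))). intros eta Heta.
  pose proof (Rmax_l 0 (Rabs P * dt * (1 - s * c))). pose proof (Rmax_r 0 (Rabs P * dt * (1 - s * c))).
  assert (HK : 0 < eta * powerRZ s (Z.of_nat C - 1) * exp (- r * dt)).
  { apply Rmult_lt_0_compat; [apply Rmult_lt_0_compat; [lra | apply powerRZ_lt; lra] | apply exp_pos]. }
  pose proof (Rint_utility_bounds _ _ HM HK) as HI. unfold f_eta. fold c in HI.
  assert (Hgap : 0 < dt * (1 - s * c)) by (apply Rmult_lt_0_compat; nra).
  apply Rle_lt_trans with (Rabs P); [apply Rle_abs|].
  apply Rlt_le_trans with (eta / (dt * (1 - s * c))).
  - apply Rmult_lt_reg_r with (dt * (1 - s * c)); auto. unfold Rdiv.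
    rewrite Rmult_assoc, Rinv_l, Rmult_1_r by lra. lra.
  - apply inv_gap_lower; auto; lra.
Qed.

End PiecewiseLinear.

Section Utility.

Variable u : R -> ER.
Hypothesis Hu_incr : nondecreasing_ext u.
Hypothesis Hu_dag : forall p, 0 < p -> exists m, is_glb (dagger_set u p) m.

Lemma dom_u_nonempty : exists x, dom_ext u x.
Proof.
  destruct (dagger_nonempty u 1 (Hu_dag 1 ltac:(lra))) as [x Hx].
  exists x. apply (superdiff_dom u x 1 Hx).
Qed.

Lemma lower_bound_le_dagger_u b p :
  is_lower_bound (dom_ext u) b -> 0 < p -> b <= dagger u p.
Proof.
  intros Hb Hp. apply (dagger_is_glb u p (Hu_dag p Hp)).
  intros x Hx. apply Hb, (superdiff_dom u x p Hx).
Qed.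

(* If [x] is a superdifferential point at slope [p > 1] and [X] one at slope 1, then
   [p (x - z) <= u x - u z <= u X - u z] for every [z] in the domain. *)
Lemma dagger_u_eventually_below z e : dom_ext u z -> 0 < e ->
  exists P, 0 < P /\ forall p, P < p -> dagger u p < z + e.
Proof.
  intros Hz He. destruct (u z) as [uz|] eqn:Ez; [|exfalso; apply Hz, Ez].
  destruct (dagger_nonempty u 1 (Hu_dag 1 ltac:(lra))) as [X HX].
  pose proof HX as [uX [EX _]].
  pose proof (Rmax_l 1 (Rabs (uX - uz) / e)). pose proof (Rmax_r 1 (Rabs (uX - uz) / e)).
  exists (Rmax 1 (Rabs (uX - uz) / e)). split; [lra|]. intros p Hp.
  destruct (dagger_nonempty u p (Hu_dag p ltac:(lra))) as [x Hx].
  assert (Hdx : dagger u p <= x) by (apply (dagger_is_glb u p (Hu_dag p ltac:(lra))), Hx).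
  assert (HxX : x <= X) by (apply (superdiff_antitone u X x 1 p); auto; lra).
  destruct Hx as [ux [Ex Hsx]].
  pose proof (Hu_incr _ _ HxX) as Hi. rewrite Ex, EX in Hi. simpl in Hi.
  specialize (Hsx z). rewrite Ez in Hsx. simpl in Hsx.
  assert (Hpe : Rabs (uX - uz) < p * e).
  { apply Rmult_lt_reg_r with (/ e); [apply Rinv_0_lt_compat, He|].
    rewrite Rmult_assoc, Rinv_r, Rmult_1_r by lra. unfold Rdiv in *. lra. }
  pose proof (Rle_abs (uX - uz)).
  assert (x - z < e) by (apply Rmult_lt_reg_l with p; nra).
  lra.
Qed.

End Utility.

Theorem mainTheorem10
  (mu r sigma dt s : R) (C : nat) (u v : R -> ER) (N : nat) (xs : nat -> R)
  (Hsigma : 0 < sigma) (Hdt : 0 < dt) (Hs : 0 < s < 1) (HC : C = 0%nat \/ C = 1%nat)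
  (HN : (1 <= N)%nat)
  (Hgrid : forall i, (S i < N)%nat -> xs i < xs (S i))
  (Hv_low : forall x, x < xs 0%nat -> v x = None)
  (Hv_fin : forall x, xs 0%nat <= x -> exists a, v x = Some a)
  (Hv_top : forall x, xs (N - 1)%nat <= x -> v x = v (xs (N - 1)%nat))
  (Hv_lin : forall i, (S i < N)%nat -> exists a b,
       forall x, xs i <= x <= xs (S i) -> v x = Some (a * x + b))
  (Hv_conc : concave_ext v) (Hv_incr : nondecreasing_ext v)
  (Hv_nonpos : forall x a, v x = Some a -> a <= 0)
  (Hu_conc : concave_ext u) (Hu_incr : nondecreasing_ext u)
  (Hu_dag : forall p, 0 < p -> exists m, is_glb (dagger_set u p) m)
  (Hu_cont : forall p, 0 < p -> continuity_pt (dagger u) p)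
  (Hu_lim0 : forall K, exists d, 0 < d /\ forall p, 0 < p < d -> K < dagger u p) :
  (forall gmin, is_glb (dom_ext u) gmin ->
     forall eps, 0 < eps -> exists H, forall eta, H < eta ->
       Rabs (gamma_eta u v mu r sigma dt s C eta - gmin) < eps) /\
  ((~ exists gmin, is_glb (dom_ext u) gmin) ->
     forall K, exists H, forall eta, H < eta ->
       gamma_eta u v mu r sigma dt s C eta < K).
Proof.
  pose proof (gamma_arg_unbounded v N xs HN Hgrid Hv_low Hv_fin Hv_top Hv_lin Hv_incr Hv_nonpos
    mu r sigma dt s C Hsigma Hdt Hs) as Harg.
  change (gamma_eta u v mu r sigma dt s C) with (fun eta => dagger u (gamma_arg v mu r sigma dt s C eta)).
  cbv beta. split.
  - intros gmin Hgmin eps He.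
    destruct (glb_approx _ _ (eps / 2) Hgmin ltac:(lra)) as [z [Hz Hzg]].
    destruct (dagger_u_eventually_below u Hu_incr Hu_dag z (eps / 2) Hz ltac:(lra)) as [P [HP0 HP]].
    destruct (Harg P) as [H HH]. exists H. intros eta Heta.
    set (p := gamma_arg v mu r sigma dt s C eta) in *.
    assert (Hp : P < p) by apply HH, Heta.
    specialize (HP p Hp).
    pose proof (lower_bound_le_dagger_u u Hu_dag gmin p (proj1 Hgmin) ltac:(lra)).
    rewrite Rabs_right by lra. lra.
  - intros Hno K.
    destruct (unbounded_of_no_glb _ K (dom_u_nonempty u Hu_dag) Hno) as [z [Hz HzK]].
    destruct (dagger_u_eventually_below u Hu_incr Hu_dag z (K - z) Hz ltac:(lra)) as [P [_ HP]].
    destruct (Harg P) as [H HH]. exists H. intros eta Heta.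
    specialize (HP _ (HH eta Heta)). lra.
Qed.
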